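(* Let $V$ be a braided vector space of diagonal type over a field $F$ of characteristic zero with basis $x_1,\dots,x_n$ and braiding $C(x_i\otimes x_j)=p_{i,j}x_j\otimes x_i$, and let $\mathfrak B(V)$ be its Nichols algebra. Let $i\neq j$. Then in $\mathfrak B(V)$: (i) $[x_i,x_j]_L=0$ if and only if $p_{i,j}=p_{j,i}=1$; (ii) $[x_i,x_j]_R=0$ if and only if $p_{i,j}=p_{j,i}=1$, or $p_{i,j}=\omega,\ p_{j,i}=\omega^2$, or $p_{i,j}=\omega^2,\ p_{j,i}=\omega$, where $\omega$ is a primitive cube root of unity.
   Context: $\mathfrak B(V)$ is the quotient of $T(V)$ by $\bigoplus_{m\ge2}\ker S_m$ (kernels of quantum symmetrizers). For generators, $[x_i,x_j]_L=p_{j,i}x_ix_j-p_{i,j}x_jx_i$ and $[x_i,x_j]_R=p_{i,j}x_ix_j-p_{j,i}x_jx_i$. *)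

From HB Require Import structures.
From mathcomp Require Import all_boot all_order all_algebra.
Set Implicit Arguments. Unset Strict Implicit. Unset Printing Implicit Defensive.
Import GRing.Theory.
Local Open Scope ring_scope.

(* The tensor algebra T(V) of V with basis x_0..x_{n-1} is modelled by
   coefficient functions on words (seq 'I_n): u w = coefficient of
   x_{w_1} ... x_{w_k}.  Elements of T(V) are the finitely supported ones. *)
Definition tensor (F : fieldType) (n : nat) := seq 'I_n -> F.

Section Nichols.
Variables (F : fieldType) (n : nat) (p : 'I_n -> 'I_n -> F).

Definition mon (w : seq 'I_n) : tensor F n := fun v => (v == w)%:R.

Definition tadd (u v : tensor F n) : tensor F n := fun w => u w + v w.
Definition tscale (a : F) (u : tensor F n) : tensor F n := fun w => a * u w.
Definition tsub (u v : tensor F n) : tensor F n := fun w => u w - v w.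

Fixpoint swapw (k : nat) (w : seq 'I_n) : seq 'I_n :=
  match k, w with
  | 0, a :: b :: t => b :: a :: t
  | k'.+1, a :: t => a :: swapw k' t
  | _, _ => w
  end.

(* the braiding c acting on the tensor factors at positions k, k+1:
   c (x_a (x) x_b) = p_{a,b} x_b (x) x_a, extended linearly.  The coefficient
   of a word w' = .. b a .. in c u is p_{a,b} times the coefficient of
   .. a b .. in u.  (Identity on words too short.) *)
Definition br (k : nat) (u : tensor F n) : tensor F n := fun w =>
  match drop k w with
  | b :: a :: _ => p a b * u (swapw k w)
  | _ => u w
  end.

(* chain m j = c_m c_{m-1} ... c_{m-j+1} (1-based braid positions),
   i.e. br (m-1) o ... o br (m-j) (0-based) *)
Fixpoint chain (m j : nat) (u : tensor F n) : tensor F n :=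
  match j with
  | 0 => u
  | j'.+1 => chain m j' (br (m - j'.+1) u)
  end.

(* (S (x) id) : apply an operator on the first (size w - 1) letters *)
Definition lift_first (op : tensor F n -> tensor F n) (u : tensor F n)
  : tensor F n := fun w =>
  let m := (size w).-1 in op (fun v => u (v ++ drop m w)) (take m w).

(* quantum symmetrizer S_m via the standard recursion
   S_1 = id,  S_{m+1} = (S_m (x) id) (1 + c_m + c_m c_{m-1} + ... + c_m ... c_1) *)
Fixpoint qsym (m : nat) (u : tensor F n) : tensor F n :=
  match m with
  | 0 => u
  | m'.+1 => lift_first (qsym m') (fun w => \sum_(j < m'.+1) chain m' j u w)
  end.

Definition homog (m : nat) (u : tensor F n) : tensor F n :=
  fun w => if size w == m then u w else 0.

(* u is zero in B(V) = T(V) / (+)_{m>=2} ker S_m , i.e. u lies in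
   (+)_{m>=2} ker S_m *)
Definition nichols_zero (u : tensor F n) : Prop :=
  (forall w, (size w <= 1)%N -> u w = 0) /\
  (forall m, (2 <= m)%N -> forall w, size w = m -> qsym m (homog m u) w = 0).

Definition brL (i j : 'I_n) : tensor F n :=
  tsub (tscale (p j i) (mon [:: i; j])) (tscale (p i j) (mon [:: j; i])).
Definition brR (i j : 'I_n) : tensor F n :=
  tsub (tscale (p i j) (mon [:: i; j])) (tscale (p j i) (mon [:: j; i])).

End Nichols.

From mathcomp Require Import all_boot all_order all_algebra.
From Stdlib Require Import FunctionalExtensionality.
Set Implicit Arguments.
Unset Strict Implicit.
Unset Printing Implicit Defensive.
Import GRing.Theory.
Local Open Scope ring_scope.

(* Both brackets are homogeneous of degree 2, so they vanish in B(V) iff they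
   lie in ker S_2 = ker (1 + c).  Applying 1 + c to a x_i x_j - b x_j x_i and
   reading off the coefficients of x_i x_j and x_j x_i gives
   a = p_{j,i} b and b = p_{i,j} a.  For [_,_]_L this says p_{i,j} p_{j,i} = 1
   twice over, forcing both to be 1; for [_,_]_R it says p_{i,j} = p_{j,i}^2 and
   p_{j,i} = p_{i,j}^2, so p_{i,j}^3 = 1 and p_{j,i} = p_{i,j}^2. *)

Section CubeRoots.
Variable R : idomainType.

Lemma expr3_eq1_cases (x : R) :
  x ^+ 3 = 1 -> x = 1 \/ 3.-primitive_root x.
Proof.
move=> x3; have [[|[|[|[|k]]]] xk k_dvd] := prim_order_exists (isT : (0 < 3)%N) x3 => //.
- by left; rewrite -[x]expr1; apply: prim_expr_order.
- by right.
Qed.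

Lemma mulr_fix_eq1 (x y : R) : x != 0 -> y != 0 ->
  (x = x * y /\ y = y * x) <-> (x = 1 /\ y = 1).
Proof.
move=> x_nz y_nz; split=> [[xy yx]|[-> ->]]; last by rewrite mulr1.
by split; [apply: (mulfI y_nz) | apply: (mulfI x_nz)]; rewrite mulr1.
Qed.

Lemma sqr_each_other_cases (x y : R) : x != 0 ->
  (x = y * y /\ y = x * x) <->
  ((x = 1 /\ y = 1) \/
   exists w : R, 3.-primitive_root w /\
     ((x = w /\ y = w ^+ 2) \/ (x = w ^+ 2 /\ y = w))).
Proof.
move=> x_nz; split=> [[xy yx]|].
  have x3 : x ^+ 3 = 1.
    apply: (mulfI x_nz); rewrite mulr1 -exprS.
    by rewrite (exprM x 2 2) !expr2 -yx -xy.
  have [x1|x_prim] := expr3_eq1_cases x3.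
    by left; split=> //; rewrite yx x1 mulr1.
  by right; exists x; split=> //; left; rewrite expr2.
have cube1 w : 3.-primitive_root w -> w ^+ 2 * w ^+ 2 = w.
  by move=> w_prim; rewrite -exprD (exprD w 3 1) prim_expr_order // mul1r.
case=> [[-> ->]|[w [w_prim [[-> ->]|[-> ->]]]]]; rewrite ?mulr1 ?cube1 //.
Qed.

End CubeRoots.

Section DegreeTwo.
Variables (F : fieldType) (n : nat) (p : 'I_n -> 'I_n -> F).

Lemma br_eq0 k (u : tensor F n) :
  (forall w, u w = 0) -> forall w, br p k u w = 0.
Proof.
by move=> u0 w; rewrite /br; case: (drop k w) => [|b [|a t]]; rewrite u0 ?mulr0.
Qed.

Lemma chain_eq0 m j (u : tensor F n) :
  (forall w, u w = 0) -> forall w, chain p m j u w = 0.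
Proof. by elim: j u => [|j IHj] u u0 //=; apply/IHj/br_eq0. Qed.

Lemma qsym_eq0 m (u : tensor F n) :
  (forall w, u w = 0) -> forall w, qsym p m u w = 0.
Proof.
elim: m u => [|m IHm] u u0 w //=; apply: IHm => v.
by rewrite big1 // => k _; apply: chain_eq0.
Qed.

Lemma qsym2E (u : tensor F n) w : qsym p 2 u w = u w + br p 0 u w.
Proof.
rewrite /= /lift_first /= big_ord_recr big_ord0 /= !cat_take_drop.
by rewrite !big_ord_recr big_ord0 /= !add0r subnn.
Qed.

Lemma nichols_zero_deg2 (u : tensor F n) :
  (forall w, size w != 2%N -> u w = 0) ->
  nichols_zero p u <->
  (forall c d : 'I_n, u [:: c; d] + p d c * u [:: d; c] = 0).
Proof.
move=> u_deg2; have homog2 : homog 2 u = u.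
  by apply: functional_extensionality => w; rewrite /homog; case: eqP => // /eqP /u_deg2.
split=> [[_ qsym_u] c d | u_ker].
  by move: (qsym_u 2%N isT [:: c; d] erefl); rewrite homog2 qsym2E.
split=> [w w_le1 | m m_ge2 w w_m]; first by apply: u_deg2; case: w w_le1 => [|? []].
have [m2 | m_ne2] := eqVneq m 2%N.
  rewrite {}m2 in w_m *; rewrite homog2 qsym2E.
  by case: w w_m => [|c [|d []]] // _; apply: u_ker.
apply: qsym_eq0 => v; rewrite /homog; case: eqP => // v_m.
by apply: u_deg2; rewrite v_m.
Qed.

(* [x_i, x_j]_L and [x_i, x_j]_R are both definitionally of this shape. *)
Definition qcomm (i j : 'I_n) (a b : F) : tensor F n :=
  tsub (tscale a (mon F [:: i; j])) (tscale b (mon F [:: j; i])).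

Lemma qcommE i j a b w :
  qcomm i j a b w = a * (w == [:: i; j])%:R - b * (w == [:: j; i])%:R.
Proof. by []. Qed.

Lemma nichols_zero_qcomm i j a b : i != j ->
  nichols_zero p (qcomm i j a b) <-> (a = p j i * b /\ b = p i j * a).
Proof.
move=> ij; have ji : j != i by rewrite eq_sym.
have deg2 w : size w != 2%N -> qcomm i j a b w = 0.
  move=> w_ne2; rewrite qcommE.
  have not_len2 (v : seq 'I_n) : size v = 2%N -> (w == v) = false.
    by move=> v2; apply/eqP => wv; rewrite wv v2 in w_ne2.
  by rewrite !not_len2 // !mulr0 subr0.
have at_ij : qcomm i j a b [:: i; j] = a.
  by rewrite qcommE !eqseq_cons (negbTE ij) !eqxx mulr1 mulr0 subr0.
have at_ji : qcomm i j a b [:: j; i] = - b.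
  by rewrite qcommE !eqseq_cons (negbTE ji) !eqxx mulr1 mulr0 sub0r.
apply: iff_trans (nichols_zero_deg2 deg2) _.
split=> [u_ker | [ab ba] c d].
  move: (u_ker i j) (u_ker j i); rewrite at_ij at_ji mulrN => /subr0_eq ab.
  by rewrite addrC => /subr0_eq ba.
have [[-> ->] | cd_ij] := eqVneq [:: c; d] [:: i; j].
  by rewrite at_ij at_ji mulrN -ab subrr.
have [[-> ->] | cd_ji] := eqVneq [:: c; d] [:: j; i].
  by rewrite at_ij at_ji ba addNr.
have swap_eq (x y : 'I_n) : ([:: d; c] == [:: x; y]) = ([:: c; d] == [:: y; x]).
  by rewrite !eqseq_cons !andbT andbC.
by rewrite !qcommE !swap_eq (negbTE cd_ij) (negbTE cd_ji) !mulr0 subrr mulr0 addr0.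
Qed.

End DegreeTwo.

Theorem lemma1p4 (F : fieldType) (n : nat) (p : 'I_n -> 'I_n -> F)
  (charF : [pchar F] =i pred0)
  (p_nz : forall a b : 'I_n, p a b != 0)
  (i j : 'I_n) (hij : i != j) :
  (nichols_zero p (brL p i j) <-> (p i j = 1 /\ p j i = 1)) /\
  (nichols_zero p (brR p i j) <->
     ((p i j = 1 /\ p j i = 1) \/
      exists omega : F, 3.-primitive_root omega /\
        ((p i j = omega /\ p j i = omega ^+ 2) \/
         (p i j = omega ^+ 2 /\ p j i = omega)))).
Proof.
split.
  apply: iff_trans (nichols_zero_qcomm p (p j i) (p i j) hij) _.
  apply: iff_trans (mulr_fix_eq1 (p_nz j i) (p_nz i j)) _.
  by split=> -[].
apply: iff_trans (nichols_zero_qcomm p (p i j) (p j i) hij) _.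
exact: sqr_each_other_cases.
Qed.
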